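(* Let $a,b,e\in\mathbb{R}$ and let $\alpha_i(t)$ ($i=1,\dots,4$) be scalar continuous functions (not necessarily odd). (i) If $a(a+e)<0$, then the system $$\begin{aligned}\dot x&=(ax+by+xz)(1+\alpha_1(t))+x(a+z)\alpha_2(t)+y\alpha_3(t),\\ \dot y&=(-bx+ay+yz)(1+\alpha_1(t))+y(a+z)\alpha_2(t)-x\alpha_3(t),\\ \dot z&=(ez-x^2-y^2-z^2)(1+\alpha_1(t)+\alpha_2(t))\end{aligned}$$ has the solution $$x(t)=\sqrt{-a(a+e)}\,\sin\Big(bt+\int_0^t(b\alpha_1(s)+\alpha_3(s))\,ds\Big),\quad y(t)=\sqrt{-a(a+e)}\,\cos\Big(bt+\int_0^t(b\alpha_1(s)+\alpha_3(s))\,ds\Big),\quad z(t)=-a,$$ lying on the cycle $x^2+y^2=-a(a+e)$, $z=-a$. (ii) The system $$\begin{aligned}\dot x&=(ax+by+xz)(1+\alpha_1(t))+x(a+z)\alpha_2(t)+y\alpha_3(t)-y(x^2+y^2)(4az+x^2+y^2+2z^2)\alpha_4(t),\\ \dot y&=(-bx+ay+yz)(1+\alpha_1(t))+y(a+z)\alpha_2(t)-x\alpha_3(t)+x(x^2+y^2)(4az+x^2+y^2+2z^2)\alpha_4(t),\\ \dot z&=-(2az+x^2+y^2+z^2)(1+\alpha_1(t)+\alpha_2(t))\end{aligned}$$ has the solution $$x(t)=a\sin\Big(bt+\int_0^t(b\alpha_1(s)+\alpha_3(s)+a^4\alpha_4(s))\,ds\Big),\quad y(t)=a\cos\Big(bt+\int_0^t(b\alpha_1(s)+\alpha_3(s)+a^4\alpha_4(s))\,ds\Big),\quad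 z(t)=-a,$$ lying on the cycle $x^2+y^2=a^2$, $z=-a$. *)

From Stdlib Require Import Reals.
From Coquelicot Require Import Coquelicot.
Open Scope R_scope.

Definition is_solution (f g h : R -> R -> R -> R -> R) (x y z : R -> R) : Prop :=
  forall t : R,
    is_derive x t (f t (x t) (y t) (z t)) /\
    is_derive y t (g t (x t) (y t) (z t)) /\
    is_derive z t (h t (x t) (y t) (z t)).

(* On the cycle x^2 + y^2 = r^2, z = -a the vector field of either system
   reduces to a pure rotation x' = w y, y' = -w x, z' = 0 with angular speed
   w(t) = b (1 + al1 t) + al3 t (plus a^4 al4 t in (ii)).  The cycle is
   therefore invariant, and it is traversed with the phase
   th(t) = b t + int_0^t (w(s) - b) ds.  The terms carrying al2 vanish on the
   cycle. *)
From Stdlib Require Import Reals Lra.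
From Coquelicot Require Import Coquelicot.
From Stdlib Require Import ssreflect.
Open Scope R_scope.

Lemma is_derive_affine_RInt (c : R) (f : R -> R) (t : R) :
  (forall s, continuous f s) ->
  is_derive (fun t => c * t + RInt f 0 t) t (c + f t).
Proof.
  move=> cf; apply: (is_derive_plus (fun t => c * t) (fun t => RInt f 0 t)).
  - by auto_derive; [|rewrite Rmult_1_r].
  - apply: is_derive_RInt; last exact: cf.
    apply: filter_forall => u; apply: RInt_correct.
    by apply: ex_RInt_continuous => s _; exact: cf.
Qed.

Lemma is_derive_scal_sin (r : R) (th : R -> R) (t d : R) :
  is_derive th t d -> is_derive (fun t => r * sin (th t)) t (d * (r * cos (th t))).
Proof.
  move=> Dth.
  have D := is_derive_scal _ _ r _ (is_derive_comp sin th t _ _ (is_derive_sin _) Dth).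
  rewrite /scal /= /mult /= in D.
  by rewrite (_ : d * (r * cos (th t)) = r * (d * cos (th t))); last ring.
Qed.

Lemma is_derive_scal_cos (r : R) (th : R -> R) (t d : R) :
  is_derive th t d -> is_derive (fun t => r * cos (th t)) t (- (d * (r * sin (th t)))).
Proof.
  move=> Dth.
  have D := is_derive_scal _ _ r _ (is_derive_comp cos th t _ _ (is_derive_cos _) Dth).
  rewrite /scal /= /mult /= in D.
  by rewrite (_ : - (d * (r * sin (th t))) = r * (d * - sin (th t))); last ring.
Qed.

Lemma scal_sin_cos_sqr (r u : R) : (r * sin u) ^ 2 + (r * cos u) ^ 2 = r ^ 2.
Proof. by rewrite -[r ^ 2]Rmult_1_r -(sin2_cos2 u) /Rsqr; ring. Qed.

Lemma is_solution_rotation (f g h : R -> R -> R -> R -> R) (r c : R) (th w : R -> R) :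
  (forall t, is_derive th t (w t)) ->
  (forall t u v, u ^ 2 + v ^ 2 = r ^ 2 ->
     f t u v c = w t * v /\ g t u v c = - (w t * u) /\ h t u v c = 0) ->
  is_solution f g h (fun t => r * sin (th t)) (fun t => r * cos (th t)) (fun _ => c).
Proof.
  move=> Dth field t.
  have [-> [-> ->]] := field t _ _ (scal_sin_cos_sqr r (th t)).
  split; [|split].
  - exact: is_derive_scal_sin.
  - exact: is_derive_scal_cos.
  - exact: is_derive_const.
Qed.

Lemma continuous_scal_plus (k : R) (f g : R -> R) (t : R) :
  continuous f t -> continuous g t -> continuous (fun s => k * f s + g s) t.
Proof.
  move=> cf cg; apply: continuous_plus cg.
  exact: (continuous_scal_r k f t cf).
Qed.

Theorem lemma1 (a b e : R) (al1 al2 al3 al4 : R -> R)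
  (c1 : forall t, continuous al1 t) (c2 : forall t, continuous al2 t)
  (c3 : forall t, continuous al3 t) (c4 : forall t, continuous al4 t) :
  (* (i) *)
  (a * (a + e) < 0 ->
   let th := fun t => b * t + RInt (fun s => b * al1 s + al3 s) 0 t in
   let x := fun t => sqrt (- (a * (a + e))) * sin (th t) in
   let y := fun t => sqrt (- (a * (a + e))) * cos (th t) in
   let z := fun _ : R => - a in
   is_solution
     (fun t x y z => (a * x + b * y + x * z) * (1 + al1 t) + x * (a + z) * al2 t + y * al3 t)
     (fun t x y z => (- b * x + a * y + y * z) * (1 + al1 t) + y * (a + z) * al2 t - x * al3 t)
     (fun t x y z => (e * z - x ^ 2 - y ^ 2 - z ^ 2) * (1 + al1 t + al2 t))
     x y z /\
   (forall t, x t ^ 2 + y t ^ 2 = - (a * (a + e)) /\ z t = - a)) /\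
  (* (ii) *)
  (let th := fun t => b * t + RInt (fun s => b * al1 s + al3 s + a ^ 4 * al4 s) 0 t in
   let x := fun t => a * sin (th t) in
   let y := fun t => a * cos (th t) in
   let z := fun _ : R => - a in
   is_solution
     (fun t x y z => (a * x + b * y + x * z) * (1 + al1 t) + x * (a + z) * al2 t + y * al3 t
                     - y * (x ^ 2 + y ^ 2) * (4 * a * z + x ^ 2 + y ^ 2 + 2 * z ^ 2) * al4 t)
     (fun t x y z => (- b * x + a * y + y * z) * (1 + al1 t) + y * (a + z) * al2 t - x * al3 t
                     + x * (x ^ 2 + y ^ 2) * (4 * a * z + x ^ 2 + y ^ 2 + 2 * z ^ 2) * al4 t)
     (fun t x y z => - (2 * a * z + x ^ 2 + y ^ 2 + z ^ 2) * (1 + al1 t + al2 t))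
     x y z /\
   (forall t, x t ^ 2 + y t ^ 2 = a ^ 2 /\ z t = - a)).
Proof.
  split.
  - move=> neg th x y z.
    have r2 : sqrt (- (a * (a + e))) ^ 2 = - (a * (a + e)) by rewrite pow2_sqrt; lra.
    split; last by move=> t; rewrite -r2; split; [exact: scal_sin_cos_sqr|].
    apply: (is_solution_rotation _ _ _ _ _ _ (fun t => b + (b * al1 t + al3 t))).
    + move=> t; apply: is_derive_affine_RInt => s.
      exact: continuous_scal_plus.
    + move=> t u v; rewrite r2 => circle; split; [ring | split; first ring].
      rewrite (_ : e * - a - u ^ 2 - v ^ 2 - (- a) ^ 2 = - (u ^ 2 + v ^ 2) - a * (a + e));
        last ring.
      by rewrite circle; ring.
  - move=> th x y z.
    split; last by move=> t; split; [exact: scal_sin_cos_sqr|].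
    apply: (is_solution_rotation _ _ _ _ _ _
              (fun t => b + (b * al1 t + al3 t + a ^ 4 * al4 t))).
    + move=> t; apply: is_derive_affine_RInt => s.
      apply: continuous_plus; first exact: continuous_scal_plus.
      exact: (continuous_scal_r _ al4 s).
    + move=> t u v circle.
      rewrite (_ : 4 * a * - a + u ^ 2 + v ^ 2 + 2 * (- a) ^ 2 = u ^ 2 + v ^ 2 - 2 * a ^ 2);
        last ring.
      rewrite (_ : 2 * a * - a + u ^ 2 + v ^ 2 + (- a) ^ 2 = u ^ 2 + v ^ 2 - a ^ 2); last ring.
      rewrite circle; split; [|split]; ring.
Qed.
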